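(* For all nonnegative integers $n$ and $k$ with $k\le n$, $$W_{m,r}[n,k]_q=\sum_{j=0}^{n-k}(-1)^{j}\,q^{-r-m(k+j)}\,\frac{r_{k+j+1,q}}{r_{k+1,q}}\,W_{m,r}[n+1,k+j+1]_q ,$$ where $r_{i,q}=\prod_{h=1}^{i-1}q^{-r-mh+m}[mh+r]_q$, so that $\frac{r_{k+j+1,q}}{r_{k+1,q}}$ stands for $\prod_{h=k+1}^{k+j}q^{-r-mh+m}[mh+r]_q$ (equal to $1$ when $j=0$).
   Context: Fix a real number $q>0$ with $q\neq 1$, a positive integer $m$ and a complex number $r$. For complex $x$ put $q^x=e^{x\ln q}$ and $[x]_q=\frac{1-q^x}{1-q}$. The numbers $W_{m,r}[n,k]_q$ (a $q$-analogue of the $r$-Whitney numbers of the second kind), for integers $n,k$, are defined by $W_{m,r}[0,0]_q=1$, $W_{m,r}[n,k]_q=0$ whenever $n<k$ or $n<0$ or $k<0$, and, for $n\ge 1$ and $0\le k\le n$, $$W_{m,r}[n,k]_q=q^{m(k-1)+r}\,W_{m,r}[n-1,k-1]_q+[mk+r]_q\,W_{m,r}[n-1,k]_q .$$ *)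

From Stdlib Require Import Reals.
Open Scope R_scope.

Record Cx : Type := Cmk { Cre : R ; Cim : R }.

Definition RtoC (x : R) : Cx := Cmk x 0.
Definition C0 : Cx := RtoC 0.
Definition C1 : Cx := RtoC 1.
Definition Cadd (x y : Cx) : Cx := Cmk (Cre x + Cre y) (Cim x + Cim y).
Definition Copp (x : Cx) : Cx := Cmk (- Cre x) (- Cim x).
Definition Csub (x y : Cx) : Cx := Cadd x (Copp y).
Definition Cmul (x y : Cx) : Cx :=
  Cmk (Cre x * Cre y - Cim x * Cim y) (Cre x * Cim y + Cim x * Cre y).
Definition Cinv (x : Cx) : Cx :=
  let d := Cre x * Cre x + Cim x * Cim x in Cmk (Cre x / d) (- Cim x / d).
Definition Cdiv (x y : Cx) : Cx := Cmul x (Cinv y).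

Definition Cexp (z : Cx) : Cx :=
  Cmk (exp (Cre z) * cos (Cim z)) (exp (Cre z) * sin (Cim z)).

Definition qpow (q : R) (x : Cx) : Cx := Cexp (Cmul x (RtoC (ln q))).

Definition qint (q : R) (x : Cx) : Cx := Cdiv (Csub C1 (qpow q x)) (RtoC (1 - q)).

Fixpoint Csum (f : nat -> Cx) (n : nat) : Cx :=
  match n with O => C0 | S n' => Cadd (Csum f n') (f n') end.
Fixpoint Cprod (f : nat -> Cx) (n : nat) : Cx :=
  match n with O => C1 | S n' => Cmul (Cprod f n') (f n') end.

Definition natC (j : nat) : Cx := RtoC (INR j).

(* q-analogue of r-Whitney numbers of the second kind, W_{m,r}[n,k]_q,
   for n, k >= 0 (negative indices give 0 by definition). *)
Fixpoint W (q : R) (m : nat) (r : Cx) (n k : nat) {struct n} : Cx :=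
  match n with
  | O => match k with O => C1 | S _ => C0 end
  | S n' =>
      if Nat.leb k n then
        match k with
        | O => (* W[n-1,-1] = 0 *)
            Cmul (qint q (Cadd (natC (m * 0)) r)) (W q m r n' 0)
        | S k' =>
            Cadd (Cmul (qpow q (Cadd (natC (m * k')) r)) (W q m r n' k'))
                 (Cmul (qint q (Cadd (natC (m * k)) r)) (W q m r n' k))
        end
      else C0
  end.

(* The defining recurrence
     W[n+1,p+1] = q^(mp+r) W[n,p] + [m(p+1)+r]_q W[n,p+1]
   can be solved for W[n,p], since q^(mp+r) is invertible with inverse
   q^(-r-mp):
     W[n,p] = q^(-r-mp) W[n+1,p+1] - c_(p+1) W[n,p+1],
     c_h := q^(-r-mh+m) [mh+r]_q.
   Iterating this N times from p = k gives an alternating sum plus a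
   remainder (-1)^N (c_(k+1) ... c_(k+N)) W[n,k+N]; for N = n-k+1 the
   remainder vanishes because W[n,p] = 0 for p > n. *)

From Pilot Require Import Defs.
From Stdlib Require Import Reals Lia.
Open Scope R_scope.
(* Defs' C0/C1 must take precedence over Stdlib's differentiability classes. *)
Import Pilot.Defs.

Lemma Cx_eq (x y : Cx) : Cre x = Cre y -> Cim x = Cim y -> x = y.
Proof. destruct x, y; simpl; intros -> ->; reflexivity. Qed.

Lemma Cx_ring : ring_theory C0 C1 Cadd Cmul Csub Copp (@eq Cx).
Proof.
  constructor; intros;
  repeat match goal with x : Cx |- _ => destruct x end;
  unfold Csub, C0, C1, RtoC, Cadd, Copp, Cmul; simpl; f_equal; ring.
Qed.
Add Ring Cx_ring_inst : Cx_ring.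

Lemma Cexp_add (a b : Cx) : Cexp (Cadd a b) = Cmul (Cexp a) (Cexp b).
Proof.
  destruct a, b; unfold Cexp, Cadd, Cmul; simpl; f_equal;
  rewrite exp_plus, ?cos_plus, ?sin_plus; ring.
Qed.

Lemma Cexp_0 : Cexp C0 = C1.
Proof.
  unfold Cexp, C0, C1, RtoC; simpl; rewrite exp_0, cos_0, sin_0; f_equal; ring.
Qed.

Lemma qpow_add (q : R) (a b : Cx) : qpow q (Cadd a b) = Cmul (qpow q a) (qpow q b).
Proof. unfold qpow; rewrite <- Cexp_add; f_equal; ring. Qed.

(* q^(-x) is the inverse of q^x; this is what lets the recurrence be inverted. *)
Lemma qpow_opp_mul (q : R) (x : Cx) : Cmul (qpow q (Copp x)) (qpow q x) = C1.
Proof.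
  rewrite <- qpow_add; unfold qpow.
  replace (Cmul (Cadd (Copp x) x) (RtoC (ln q))) with C0 by ring.
  apply Cexp_0.
Qed.

Lemma natC_add (a b : nat) : natC (a + b) = Cadd (natC a) (natC b).
Proof. unfold natC, RtoC, Cadd; simpl; rewrite plus_INR; f_equal; ring. Qed.

Lemma sign_succ (N : nat) : RtoC ((-1) ^ S N) = Copp (RtoC ((-1) ^ N)).
Proof. apply Cx_eq; unfold RtoC, Copp; simpl; ring. Qed.

Lemma Csum_ext (f g : nat -> Cx) (N : nat) :
  (forall j, (j < N)%nat -> f j = g j) -> Csum f N = Csum g N.
Proof.
  induction N as [|N IH]; intros Hfg; simpl; [reflexivity|].
  rewrite IH by (intros; apply Hfg; lia).
  rewrite Hfg by lia; reflexivity.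
Qed.

Lemma alternating_telescope (a b c : nat -> Cx) (k N : nat) :
  (forall j, (j < N)%nat ->
     a (k + j)%nat = Csub (b (k + j)%nat) (Cmul (c (k + 1 + j)%nat) (a (k + 1 + j)%nat))) ->
  a k =
  Cadd (Csum (fun j => Cmul (RtoC ((-1) ^ j))
                            (Cmul (Cprod (fun i => c (k + 1 + i)%nat) j) (b (k + j)%nat))) N)
       (Cmul (RtoC ((-1) ^ N)) (Cmul (Cprod (fun i => c (k + 1 + i)%nat) N) (a (k + N)%nat))).
Proof.
  induction N as [|N IH]; intros Hrel.
  - cbn [Csum Cprod]; rewrite Nat.add_0_r.
    change (RtoC ((-1) ^ 0)) with C1; ring.
  - rewrite IH by (intros; apply Hrel; lia).
    rewrite (Hrel N) by lia.
    replace (a (k + 1 + N)%nat) with (a (k + S N)%nat) by (f_equal; lia).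
    cbn [Csum Cprod]; rewrite sign_succ; ring.
Qed.

Definition whitney_factor (q : R) (m : nat) (r : Cx) (h : nat) : Cx :=
  Cmul (qpow q (Cadd (Csub (Copp r) (natC (m * h))) (natC m)))
       (qint q (Cadd (natC (m * h)) r)).

Section Whitney.
Variables (q : R) (m : nat) (r : Cx).

Lemma W_vanish (n k : nat) : (n < k)%nat -> W q m r n k = C0.
Proof.
  revert k; induction n as [|n IH]; intros [|k] Hlt; try lia; try reflexivity.
  cbn [W]; destruct (Nat.leb (S k) (S n)) eqn:Hle; [|reflexivity].
  apply Nat.leb_le in Hle; lia.
Qed.

Lemma W_succ (n k : nat) : (k <= n)%nat ->
  W q m r (S n) (S k) =
  Cadd (Cmul (qpow q (Cadd (natC (m * k)) r)) (W q m r n k))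
       (Cmul (qint q (Cadd (natC (m * S k)) r)) (W q m r n (S k))).
Proof.
  intros Hk; cbn [W].
  replace (Nat.leb (S k) (S n)) with true by (symmetry; apply Nat.leb_le; lia).
  reflexivity.
Qed.

Lemma W_inverted (n p : nat) : (p <= n)%nat ->
  W q m r n p =
  Csub (Cmul (qpow q (Csub (Copp r) (natC (m * p)))) (W q m r (S n) (S p)))
       (Cmul (whitney_factor q m r (S p)) (W q m r n (S p))).
Proof.
  intros Hp; rewrite W_succ by exact Hp; unfold whitney_factor.
  replace (m * S p)%nat with (m * p + m)%nat by ring; rewrite natC_add.
  replace (Cadd (Csub (Copp r) (Cadd (natC (m * p)) (natC m))) (natC m))
    with (Copp (Cadd (natC (m * p)) r)) by ring.
  replace (Csub (Copp r) (natC (m * p))) with (Copp (Cadd (natC (m * p)) r)) by ring.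
  pose proof (qpow_opp_mul q (Cadd (natC (m * p)) r)) as Hinv.
  transitivity (Cmul (Cmul (qpow q (Copp (Cadd (natC (m * p)) r)))
                           (qpow q (Cadd (natC (m * p)) r))) (W q m r n p));
    [rewrite Hinv; ring | ring].
Qed.

End Whitney.

Theorem theorem1 (q : R) (m : nat) (r : Cx)
  (hq : 0 < q) (hq1 : q <> 1) (hm : (0 < m)%nat)
  (n k : nat) (hk : (k <= n)%nat) :
  W q m r n k =
  Csum (fun j =>
          Cmul (RtoC ((-1) ^ j))
          (Cmul (qpow q (Csub (Copp r) (natC (m * (k + j)))))
          (Cmul (Cprod (fun i =>
                          let h := (k + 1 + i)%nat in
                          Cmul (qpow q (Cadd (Csub (Copp r) (natC (m * h))) (natC m)))
                               (qint q (Cadd (natC (m * h)) r))) j)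
                (W q m r (S n) (k + j + 1)))))
       (n - k + 1).
Proof.
  rewrite (alternating_telescope (W q m r n)
             (fun p => Cmul (qpow q (Csub (Copp r) (natC (m * p)))) (W q m r (S n) (S p)))
             (whitney_factor q m r) k (n - k + 1)).
  2:{ intros j Hj; rewrite W_inverted by lia.
      replace (S (k + j)) with (k + 1 + j)%nat by lia; reflexivity. }
  (* The remainder involves W[n,n+1], which is 0; the summands agree up to
     reassociation. *)
  rewrite (W_vanish q m r n (k + (n - k + 1))) by lia.
  assert (drop_zero_remainder : forall s x y, Cadd s (Cmul x (Cmul y C0)) = s)
    by (intros; ring).
  rewrite drop_zero_remainder.
  apply Csum_ext; intros j _.
  replace (k + j + 1)%nat with (S (k + j)) by lia.
  unfold whitney_factor; ring.
Qed.
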